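(* Let $\mathbf A$ and $\mathbf B$ be algebras on the same underlying set $A$ such that some ternary operation $q$ is a Mal'cev term operation of both, and let $n\ge1$ and $\alpha_0,\dots,\alpha_{n-1}$ be equivalence relations on $A$ that are congruences of both $\mathbf A$ and $\mathbf B$. Then $[\alpha_i\mid i\in I]_{\mathbf A}=[\alpha_i\mid i\in I]_{\mathbf B}$ for all nonempty $I\subseteq\{0,\dots,n-1\}$ if and only if $\Delta_{\mathbf A}(\alpha_0,\dots,\alpha_{n-1})=\Delta_{\mathbf B}(\alpha_0,\dots,\alpha_{n-1})$.
   Context: A Mal'cev term operation is a ternary term operation $q$ with $q(x,x,y)=y=q(y,x,x)$. $[\cdots]_{\mathbf X}$ denotes the commutator computed in the algebra $\mathbf X$, and $[\alpha_i\mid i\in I]$ means $[\alpha_{i_0},\dots,\alpha_{i_{k-1}}]$ where $I=\{i_0<\dots<i_{k-1}\}$. Higher commutator (Bulatov): in an algebra $\mathbf X$, for congruences $\beta_0,\dots,\beta_{m-1},\gamma$, say $\beta_0,\dots,\beta_{m-2}$ centralize $\beta_{m-1}$ modulo $\gamma$ if for all tuples $\mathbf a_i,\mathbf b_i$ ($i<m$, with $\mathbf a_i\neq\mathbf b_i$ congruent modulo $\beta_i$ coordinatewise) and every term operation $t$ of $\mathbf X$ such that $t(\mathbf x_0,\dots,\mathbf x_{m-2},\mathbf a_{m-1})\equiv_\gamma t(\mathbf x_0,\dots,\mathbf x_{m-2},\mathbf b_{m-1})$ for all $(\mathbf x_0,\dots,\mathbf x_{m-2})\in(\{\mathbf a_0,\mathbf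 b_0\}\times\dots\times\{\mathbf a_{m-2},\mathbf b_{m-2}\})\setminus\{(\mathbf b_0,\dots,\mathbf b_{m-2})\}$, we have $t(\mathbf b_0,\dots,\mathbf b_{m-2},\mathbf a_{m-1})\equiv_\gamma t(\mathbf b_0,\dots,\mathbf b_{m-2},\mathbf b_{m-1})$. $[\beta_0,\dots,\beta_{m-1}]_{\mathbf X}$ is the smallest such $\gamma$. For $k\ge0$, $k_{(i)}$ is the $i$-th binary digit of $k$ (least significant is $i=0$). For $a,b\in A$ and $i<n$, $\mathbf c_i^n(a,b)\in A^{2^n}$ has $k$-th coordinate $a$ if $k_{(i)}=0$ and $b$ if $k_{(i)}=1$. $\Delta_{\mathbf X}(\alpha_0,\dots,\alpha_{n-1})$ is the subuniverse of $\mathbf X^{2^n}$ generated by $\{\mathbf c_i^n(a,b): i<n,\ (a,b)\in\alpha_i\}$. *)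

From mathcomp Require Import all_boot.
Set Implicit Arguments. Unset Strict Implicit. Unset Printing Implicit Defensive.

Record algebra (A : Type) := Algebra {
  op_idx : Type;
  arity : op_idx -> nat;
  op : forall o : op_idx, ('I_(arity o) -> A) -> A }.

Section UA.
Variable A : Type.
Implicit Types (X : algebra A).

Inductive termop X (V : Type) : ((V -> A) -> A) -> Prop :=
| T_var (v : V) (f : (V -> A) -> A) :
    (forall x, f x = x v) -> termop X f
| T_op (o : op_idx X) (gs : 'I_(arity o) -> (V -> A) -> A) (f : (V -> A) -> A) :
    (forall l, termop X (gs l)) ->
    (forall x, f x = @op A X o (fun l => gs l x)) -> termop X f.

Definition malcev_term X (q : A -> A -> A -> A) : Prop :=
  termop X (fun x : 'I_3 -> A => q (x (inord 0)) (x (inord 1)) (x (inord 2))) /\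
  (forall x y, q x x y = y /\ q y x x = y).

Definition congruence X (r : A -> A -> Prop) : Prop :=
  [/\ (forall x, r x x), (forall x y, r x y -> r y x),
      (forall x y z, r x y -> r y z -> r x z) &
      forall (o : op_idx X) (x y : 'I_(arity o) -> A),
        (forall l, r (x l) (y l)) -> r (@op A X o x) (@op A X o y)].

(* Bulatov's centrality condition: beta_0,...,beta_(m-2) centralize beta_(m-1)
   modulo gamma.  Block i of the tuple of variables is a tuple of length k i;
   the term t has variables {i : 'I_m & 'I_(k i)}. *)
Definition centralizes X (m : nat) (beta : 'I_m -> A -> A -> Prop)
    (gamma : A -> A -> Prop) : Prop :=
  forall (k : 'I_m -> nat) (a b : forall i : 'I_m, 'I_(k i) -> A),
    (forall i, exists l, a i l <> b i l) ->
    (forall i l, beta i (a i l) (b i l)) ->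
    forall t : ({i : 'I_m & 'I_(k i)} -> A) -> A,
    termop X t ->
    let sel (s : 'I_m -> bool) (last : bool) (i : 'I_m) : 'I_(k i) -> A :=
      if val i == m.-1 then (if last then b i else a i)
      else (if s i then b i else a i) in
    let ev (x : forall i : 'I_m, 'I_(k i) -> A) := t (fun p => x (tag p) (tagged p)) in
    (forall s : 'I_m -> bool,
        (exists i : 'I_m, val i != m.-1 /\ s i = false) ->
        gamma (ev (sel s false)) (ev (sel s true))) ->
    gamma (ev (sel (fun _ => true) false)) (ev (sel (fun _ => true) true)).

Definition commutator X (m : nat) (beta : 'I_m -> A -> A -> Prop) : A -> A -> Prop :=
  fun x y => forall gamma, congruence X gamma -> centralizes X beta gamma -> gamma x y.

(* [alpha_i | i in I]_X, with I = {i_0 < ... < i_(k-1)} listed increasingly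
   (enum of a set of ordinals is increasing). *)
Definition commutator_sub X (n : nat) (alpha : 'I_n -> A -> A -> Prop)
    (I : {set 'I_n}) : A -> A -> Prop :=
  commutator X (fun j : 'I_#|I| => alpha (enum_val j)).

Definition bit (k i : nat) : bool := odd (k %/ 2 ^ i).

Definition cvec (n : nat) (i : nat) (a b : A) : 'I_(2 ^ n) -> A :=
  fun k => if bit k i then b else a.

Inductive Delta X (n : nat) (alpha : 'I_n -> A -> A -> Prop) : ('I_(2 ^ n) -> A) -> Prop :=
| D_gen (i : 'I_n) (a b : A) (v : 'I_(2 ^ n) -> A) :
    alpha i a b -> (forall k, v k = @cvec n i a b k) -> Delta X alpha v
| D_op (o : op_idx X) (vs : 'I_(arity o) -> 'I_(2 ^ n) -> A) (v : 'I_(2 ^ n) -> A) :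
    (forall l, Delta X alpha (vs l)) ->
    (forall k, v k = @op A X o (fun l => vs l k)) -> Delta X alpha v.

End UA.

From mathcomp Require Import all_boot zify.
From Stdlib Require Import FunctionalExtensionality IndefiniteDescription Classical.
Set Implicit Arguments. Unset Strict Implicit. Unset Printing Implicit Defensive.

(* For m >= 1 congruences beta of an algebra with a Mal'cev term, (x, y) lies in
   [beta_0, ..., beta_(m-1)] exactly when the tuple of A^(2^m) equal to y at the top
   vertex of the cube and to x elsewhere lies in Delta(beta).  One direction writes that
   tuple as a term applied to generators and feeds it to the centrality condition; for
   the other, the relation so defined is a congruence that centralizes, which is shown
   by using the Mal'cev term to clear the cube one coordinate at a time.
   Commutators of subfamilies are thus read off the faces of Delta(alpha), which gives
   one implication.  For the other, a tuple of Delta_A(alpha) is rebuilt inside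
   Delta_B(alpha) vertex by vertex in increasing order: the correction needed at a
   vertex K is a commutator relation for the subfamily indexed by the bits of K. *)

(** * Vertices of the cube as bit vectors *)

Fixpoint nat_of_bits (f : nat -> bool) (m : nat) : nat :=
  if m is m'.+1 then f 0 + 2 * nat_of_bits (fun i => f i.+1) m' else 0.

Lemma bit0E x : bit x 0 = odd x.
Proof. by rewrite /bit expn0 divn1. Qed.

Lemma bitSE x i : bit x i.+1 = bit x./2 i.
Proof. by rewrite /bit expnS divnMA divn2. Qed.

Lemma half_bit_double (b : bool) x : (b + 2 * x)./2 = x.
Proof. by rewrite halfD mul2n half_double odd_double andbF add0n; case: b. Qed.

Lemma nat_of_bits_lt f m : nat_of_bits f m < 2 ^ m.
Proof.
elim: m f => [|m IH] f //=; have := IH (fun i => f i.+1).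
by rewrite expnS; case: (f 0) => /=; lia.
Qed.

Lemma bit_nat_of_bits f m i : bit (nat_of_bits f m) i = (i < m) && f i.
Proof.
elim: m f i => [|m IH] f [|i] /=; rewrite ?bit0E ?bitSE //.
- by rewrite /bit div0n.
- by rewrite oddD oddM /=; case: (f 0).
- by rewrite half_bit_double IH.
Qed.

Lemma eq_nat_of_bits f g m :
  (forall i, i < m -> f i = g i) -> nat_of_bits f m = nat_of_bits g m.
Proof.
elim: m f g => [|m IH] f g //= h.
by rewrite h // (IH _ (fun i => g i.+1)) // => i hi; apply: h.
Qed.

Lemma nat_of_bitsK x m : x < 2 ^ m -> nat_of_bits (bit x) m = x.
Proof.
elim: m x => [|m IH] x /=; first by rewrite expn0; case: x.
rewrite expnS => lt_x; rewrite (@eq_nat_of_bits _ (bit x./2)) => [|i _]; last first.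
  by rewrite bitSE.
rewrite IH; first by rewrite bit0E mul2n odd_double_half.
by move: lt_x; rewrite -{1}(odd_double_half x) -mul2n; case: (odd x) => /=; lia.
Qed.

Lemma leq_nat_of_bits (f g : nat -> bool) m :
  (forall i, i < m -> f i -> g i) -> nat_of_bits f m <= nat_of_bits g m.
Proof.
elim: m f g => [|m IH] f g //= h.
have := IH (fun i => f i.+1) (fun i => g i.+1) (fun i hi => h i.+1 hi).
by have := h 0 isT; case: (f 0); case: (g 0) => //=; lia.
Qed.

Definition vertex m (f : nat -> bool) : 'I_(2 ^ m) := Ordinal (nat_of_bits_lt f m).

Lemma bit_vertex m f i : bit (vertex m f) i = (i < m) && f i.
Proof. exact: bit_nat_of_bits. Qed.

Lemma eq_vertex m (x y : 'I_(2 ^ m)) :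
  (forall i, i < m -> bit x i = bit y i) -> x = y.
Proof.
move=> h; apply: val_inj => /=.
by rewrite -(nat_of_bitsK (ltn_ord x)) -(nat_of_bitsK (ltn_ord y)); apply: eq_nat_of_bits.
Qed.

Lemma leq_vertex m (x y : 'I_(2 ^ m)) :
  (forall i, i < m -> bit x i -> bit y i) -> x <= y.
Proof.
move=> h; rewrite -(nat_of_bitsK (ltn_ord x)) -(nat_of_bitsK (ltn_ord y)).
exact: leq_nat_of_bits.
Qed.

Lemma vertex_gt0_bit m (x : 'I_(2 ^ m)) : 0 < x -> exists i : 'I_m, bit x i.
Proof.
move=> x_gt0; apply: NNPP => no_bit.
have : x <= vertex m (fun _ => false).
  by apply: leq_vertex => i lt_im bxi; case: no_bit; exists (Ordinal lt_im).
suff -> : val (vertex m (fun _ => false)) = 0 by rewrite leqn0 => /eqP x0; rewrite x0 in x_gt0.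
by rewrite /=; elim: m {x x_gt0 no_bit} => //= m ->.
Qed.

(** * Term operations and Delta *)

Section TermOperations.
Variables (A : Type) (X : algebra A).

Lemma termop_comp (V W : Type) (t : (V -> A) -> A) (h : V -> W) :
  termop X t -> termop X (fun y : W -> A => t (fun v => y (h v))).
Proof.
elim=> [v f hf | o gs f _ IH hf].
  by apply: (@T_var _ X _ (h v)) => x; rewrite hf.
by apply: (T_op (gs := fun l y => gs l (fun v => y (h v)))) => // x; rewrite hf.
Qed.

Lemma congruence_termop (ga : A -> A -> Prop) (V : Type) (t : (V -> A) -> A) x y :
  congruence X ga -> termop X t -> (forall v, ga (x v) (y v)) -> ga (t x) (t y).
Proof.
case=> _ _ _ ga_op ht; elim: ht x y => [v f hf | o gs f _ IH hf] x y hxy.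
  by rewrite !hf.
by rewrite !hf; apply: ga_op => l; apply: IH.
Qed.

Lemma Delta_ext m (be : 'I_m -> A -> A -> Prop) (v w : 'I_(2 ^ m) -> A) :
  Delta X be v -> (forall k, w k = v k) -> Delta X be w.
Proof.
case=> [i a b v' hab hv | o vs v' hvs hv] hwv.
  by apply: (@D_gen _ X _ _ i a b _ hab) => k; rewrite hwv hv.
by apply: (D_op (vs := vs)) => // k; rewrite hwv hv.
Qed.

Lemma Delta_termop m (be : 'I_m -> A -> A -> Prop) (V : Type) (t : (V -> A) -> A)
    (g : V -> 'I_(2 ^ m) -> A) :
  termop X t -> (forall v, Delta X be (g v)) -> Delta X be (fun k => t (fun v => g v k)).
Proof.
move=> ht hg; elim: ht => [v f hf | o gs f _ IH hf].
  by apply: Delta_ext (hg v) _ => k; rewrite hf.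
by apply: (D_op (vs := fun l k => gs l (fun v => g v k))) => // k; rewrite hf.
Qed.

Lemma Delta_comp m m' (be : 'I_m -> A -> A -> Prop) (be' : 'I_m' -> A -> A -> Prop)
    (phi : 'I_(2 ^ m') -> 'I_(2 ^ m)) :
  (forall i a b, be i a b -> Delta X be' (fun k => @cvec A m i a b (phi k))) ->
  forall v, Delta X be v -> Delta X be' (fun k => v (phi k)).
Proof.
move=> hgen v; elim=> [i a b v' hab hv | o vs v' _ IH hv].
  by apply: Delta_ext (hgen _ _ _ hab) _ => k; rewrite hv.
by apply: (D_op (vs := fun l k => vs l (phi k))) => // k; rewrite hv.
Qed.

Lemma Delta_const m (be : 'I_m -> A -> A -> Prop) :
  0 < m -> (forall i, congruence X (be i)) -> forall x, Delta X be (fun _ => x).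
Proof.
move=> m_gt0 hc x; apply: (@D_gen _ X _ _ (Ordinal m_gt0) x x); first by case: (hc (Ordinal m_gt0)).
by move=> k; rewrite /cvec; case: bit.
Qed.

Definition triple (x y z : A) (i : 'I_3) : A := nth x [:: x; y; z] i.

Lemma tripleE x y z :
  [/\ triple x y z (inord 0) = x, triple x y z (inord 1) = y & triple x y z (inord 2) = z].
Proof. by rewrite /triple !inordK. Qed.

Variable q : A -> A -> A -> A.
Hypothesis hq : malcev_term X q.

Lemma malcev_xxy x y : q x x y = y. Proof. by case: hq => _ /(_ x y) []. Qed.
Lemma malcev_yxx x y : q y x x = y. Proof. by case: hq => _ /(_ x y) []. Qed.

Lemma Delta_malcev m (be : 'I_m -> A -> A -> Prop) u v w :
  Delta X be u -> Delta X be v -> Delta X be w -> Delta X be (fun k => q (u k) (v k) (w k)).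
Proof.
move=> hu hv hw; have [hq_term _] := hq.
apply: Delta_ext (Delta_termop (g := fun i k => triple (u k) (v k) (w k) i) hq_term _) _.
  by case=> [[|[|[|//]]] ?].
by move=> k /=; have [-> -> ->] := tripleE (u k) (v k) (w k).
Qed.

Lemma congruence_malcev (ga : A -> A -> Prop) x y z x' y' z' :
  congruence X ga -> ga x x' -> ga y y' -> ga z z' -> ga (q x y z) (q x' y' z').
Proof.
move=> hga hx hy hz; have [hq_term _] := hq.
have := congruence_termop (x := triple x y z) (y := triple x' y' z') hga hq_term.
have [-> -> ->] := tripleE x y z; have [-> -> ->] := tripleE x' y' z'.
by apply; case=> [[|[|[|//]]] ?].
Qed.

End TermOperations.

(** * Bulatov's condition on the cube *)

Definition top_vertex m : 'I_(2 ^ m) := vertex m (fun _ => true).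
Definition is_top m (k : 'I_(2 ^ m)) : bool := [forall j : 'I_m, bit k j].
Definition clear_bit m (j : nat) (k : 'I_(2 ^ m)) : 'I_(2 ^ m) :=
  vertex m (fun i => bit k i && (i != j)).

Definition corner (A : Type) m (x y : A) (k : 'I_(2 ^ m)) : A := if is_top k then y else x.

Lemma is_top_vertex m : is_top (top_vertex m).
Proof. by apply/forallP => j; rewrite bit_vertex ltn_ord. Qed.

Lemma is_topP m (k : 'I_(2 ^ m)) : is_top k -> k = top_vertex m.
Proof.
move/forallP=> all_bits; apply: eq_vertex => i lt_im.
by rewrite bit_vertex lt_im (all_bits (Ordinal lt_im)).
Qed.

Lemma bit_clear_bit m j (k : 'I_(2 ^ m)) i :
  bit (clear_bit j k) i = (i < m) && bit k i && (i != j).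
Proof. by rewrite bit_vertex andbA. Qed.

Lemma clear_bit_id m j (k : 'I_(2 ^ m)) : ~~ bit k j -> clear_bit j k = k.
Proof.
move=> nbit; apply: eq_vertex => i lt_im; rewrite bit_clear_bit lt_im.
by case: (eqVneq i j) => [->|]; rewrite ?andbT // (negbTE nbit).
Qed.

Lemma clear_bit_not_top m j (k : 'I_(2 ^ m)) : j < m -> ~~ is_top (clear_bit j k).
Proof.
by move=> lt_jm; apply/negP => /forallP /(_ (Ordinal lt_jm)); rewrite bit_clear_bit eqxx andbF.
Qed.

Lemma corner_top A m (x y : A) : corner x y (top_vertex m) = y.
Proof. by rewrite /corner is_top_vertex. Qed.

Lemma corner_not_top A m (x y : A) (k : 'I_(2 ^ m)) : ~~ is_top k -> corner x y k = x.
Proof. by rewrite /corner => /negbTE ->. Qed.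

Section CubeCentrality.
Variables (A : Type) (X : algebra A) (m : nat) (be : 'I_m -> A -> A -> Prop).

Definition cube_eval (k : 'I_m -> nat) (t : ({i : 'I_m & 'I_(k i)} -> A) -> A)
    (a b : forall i : 'I_m, 'I_(k i) -> A) (kk : 'I_(2 ^ m)) : A :=
  t (fun p => if bit kk (tag p) then b (tag p) (tagged p) else a (tag p) (tagged p)).

Lemma cube_eval_select k t (a b : forall i : 'I_m, 'I_(k i) -> A) (kk : 'I_(2 ^ m))
    (s : 'I_m -> bool) (last : bool) :
  (forall i : 'I_m, bit kk i = (if val i == m.-1 then last else s i)) ->
  cube_eval t a b kk =
  t (fun p => (if val (tag p) == m.-1 then (if last then b (tag p) else a (tag p))
               else (if s (tag p) then b (tag p) else a (tag p))) (tagged p)).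
Proof.
move=> bits_kk; rewrite /cube_eval; congr t; apply: functional_extensionality_dep => p.
by rewrite bits_kk; case: (val (tag p) == m.-1); [case: (last) | case: (s (tag p))].
Qed.

Definition cube_centralizes (ga : A -> A -> Prop) : Prop :=
  forall k (a b : forall i : 'I_m, 'I_(k i) -> A),
    (forall i, exists l, a i l <> b i l) -> (forall i l, be i (a i l) (b i l)) ->
    forall t : ({i : 'I_m & 'I_(k i)} -> A) -> A, termop X t ->
    (forall kk : 'I_(2 ^ m), bit kk m.-1 -> ~~ is_top kk ->
       ga (cube_eval t a b (clear_bit m.-1 kk)) (cube_eval t a b kk)) ->
    ga (cube_eval t a b (clear_bit m.-1 (top_vertex m))) (cube_eval t a b (top_vertex m)).

Lemma centralizesP ga : 0 < m -> centralizes X be ga <-> cube_centralizes ga.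
Proof.
move=> m_gt0; have lt_last : m.-1 < m by rewrite prednK.
have bits_clear_top (i : 'I_m) :
    bit (clear_bit m.-1 (top_vertex m)) i = (if val i == m.-1 then false else true).
  by rewrite bit_clear_bit bit_vertex ltn_ord; case: eqP.
have bits_top (i : 'I_m) : bit (top_vertex m) i = (if val i == m.-1 then true else true).
  by rewrite bit_vertex ltn_ord; case: ifP.
split=> [hcent k a b ne rel t ht hyp | hcube k a b ne rel t ht sel ev hyp].
- rewrite (cube_eval_select _ _ _ bits_clear_top) (cube_eval_select _ _ _ bits_top).
  apply: (hcent k a b ne rel t ht) => s [i [ne_last s_i]].
  pose kk := vertex m (fun j => (j == m.-1) || oapp s false (insub j)).
  have bits_kk (j : 'I_m) : bit kk j = (val j == m.-1) || s j.
    by rewrite bit_vertex ltn_ord valK.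
  rewrite -(@cube_eval_select _ t a b kk s true); last by move=> j; rewrite bits_kk; case: eqP.
  rewrite -(@cube_eval_select _ t a b (clear_bit m.-1 kk) s false); last first.
    by move=> j; rewrite bit_clear_bit ltn_ord bits_kk /=; case: eqP; rewrite ?andbT.
  apply: hyp; first by rewrite bit_vertex lt_last eqxx.
  by apply/negP => /forallP /(_ i); rewrite bits_kk s_i orbF (negbTE ne_last).
- have evE s last (kk : 'I_(2 ^ m)) :
      (forall i : 'I_m, bit kk i = (if val i == m.-1 then last else s i)) ->
      ev (sel s last) = cube_eval t a b kk.
    by move=> bits_kk; rewrite (cube_eval_select t a b bits_kk).
  rewrite (evE _ _ _ bits_clear_top) (evE _ _ _ bits_top).
  apply: hcube => // kk last_kk not_top.
  have [i ne_last nbit_i] : exists2 i : 'I_m, val i != m.-1 & ~~ bit kk i.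
    move: not_top; rewrite negb_forall => /existsP [i nbit_i]; exists i => //.
    by apply: contraNneq nbit_i => ->.
  have := hyp (fun i => bit kk i); rewrite (evE _ true kk); last by move=> j; case: eqP => // ->.
  rewrite (evE _ false (clear_bit m.-1 kk)); last first.
    by move=> j; rewrite bit_clear_bit ltn_ord /=; case: eqP => [->|]; rewrite ?andbF ?andbT.
  by apply; exists i; split => //; apply/negbTE.
Qed.

End CubeCentrality.

(** * Commutators and corners of Delta *)

Section CommutatorToDelta.
Variables (A : Type) (X : algebra A) (q : A -> A -> A -> A).
Hypothesis hq : malcev_term X q.
Variables (m : nat) (be : 'I_m -> A -> A -> Prop).
Hypothesis m_gt0 : 0 < m.
Hypothesis hc : forall i, congruence X (be i).

Lemma Delta_clear_bit j v : Delta X be v -> Delta X be (fun k => v (clear_bit j k)).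
Proof.
apply: Delta_comp => i a b hab; case: (eqVneq (val i) j) => [eq_ij|ne_ij].
  apply: Delta_ext (Delta_const m_gt0 hc a) _ => k.
  by rewrite /cvec bit_clear_bit eq_ij eqxx !andbF.
apply: (@D_gen _ X _ _ i a b _ hab) => k.
by rewrite /cvec bit_clear_bit ltn_ord ne_ij andbT.
Qed.

(* q(u top, u, v) is u top away from the top vertex, and v top at it. *)
Lemma Delta_corner_of_agree u v : Delta X be u -> Delta X be v ->
  (forall k, ~~ is_top k -> u k = v k) -> Delta X be (corner (u (top_vertex m)) (v (top_vertex m))).
Proof.
move=> hu hv agree.
apply: Delta_ext (Delta_malcev hq (Delta_const m_gt0 hc (u (top_vertex m))) hu hv) _ => k.
rewrite /corner; case: ifP => [/is_topP ->|/negbT /agree ->].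
  by rewrite (malcev_xxy hq).
by rewrite (malcev_yxx hq).
Qed.

Definition corner_rel (x y : A) : Prop := Delta X be (corner x y).

Lemma corner_rel_congruence : congruence X corner_rel.
Proof.
split.
- move=> x; apply: Delta_ext (Delta_const m_gt0 hc x) _ => k.
  by rewrite /corner; case: ifP.
- move=> x y hxy.
  apply: Delta_ext (Delta_malcev hq (Delta_const m_gt0 hc y) hxy (Delta_const m_gt0 hc x)) _.
  by move=> k; rewrite /corner; case: ifP => _; rewrite ?(malcev_xxy hq) ?(malcev_yxx hq).
- move=> x y z hxy hyz; apply: Delta_ext (Delta_malcev hq hxy (Delta_const m_gt0 hc y) hyz) _.
  by move=> k; rewrite /corner; case: ifP => _; rewrite ?(malcev_xxy hq) ?(malcev_yxx hq).
- move=> o x y hxy; apply: (D_op (vs := fun l => corner (x l) (y l))) => // k.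
  by rewrite /corner; case: ifP.
Qed.

Section ClearBits.
Variable w : 'I_(2 ^ m) -> A.
Hypothesis wD : Delta X be w.
Hypothesis w_step : forall kk : 'I_(2 ^ m), bit kk m.-1 -> ~~ is_top kk ->
  corner_rel (w (clear_bit m.-1 kk)) (w kk).

Definition cleared (r : nat) (v : 'I_(2 ^ m) -> A) : Prop :=
  [/\ Delta X be v,
      (forall kk : 'I_(2 ^ m), ~~ bit kk m.-1 -> v kk = w kk),
      (forall kk : 'I_(2 ^ m), bit kk m.-1 -> (exists2 j, j < r & ~~ bit kk j) ->
         v kk = w (clear_bit m.-1 kk))
    & forall kk, corner_rel (v kk) (w kk)].

Lemma cleared0 : cleared 0 w.
Proof.
split=> // [kk _ [] //|kk].
by case: corner_rel_congruence => + _ _ _; apply.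
Qed.

(* Where bit r is clear the new tuple takes the value of v shifted down along the last
   coordinate; where bit r is set it keeps the values already cleared. *)
Lemma cleared_step r v : r < m.-1 -> cleared r v ->
  cleared r.+1 (fun kk => q (v kk) (v (clear_bit r kk)) (v (clear_bit m.-1 (clear_bit r kk)))).
Proof.
move=> lt_r [vD v_low v_up v_rel].
have [rel_refl rel_sym rel_trans _] := corner_rel_congruence.
have ne_r : m.-1 != r by rewrite neq_ltn lt_r orbT.
have lt_last : m.-1 < m by rewrite prednK.
have bit_clear_r (kk : 'I_(2 ^ m)) i : i != r -> i < m -> bit (clear_bit r kk) i = bit kk i.
  by move=> ne_ir lt_im; rewrite bit_clear_bit lt_im ne_ir andbT.
split.
- apply: Delta_malcev => //; first exact: Delta_clear_bit.
  exact: (Delta_clear_bit r (Delta_clear_bit m.-1 vD)).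
- move=> kk low_kk.
  have low_r : ~~ bit (clear_bit r kk) m.-1 by rewrite bit_clear_r.
  by rewrite (clear_bit_id low_r) (malcev_yxx hq) v_low.
- move=> kk up_kk [j lt_j nbit_j]; case bit_r : (bit kk r).
  + have lt_jr : j < r.
      move: lt_j; rewrite ltnS leq_eqVlt => /orP [/eqP eq_jr|//].
      by move: nbit_j; rewrite eq_jr bit_r.
    have up_r : bit (clear_bit r kk) m.-1 by rewrite bit_clear_r.
    have ex_r : exists2 j, j < r & ~~ bit (clear_bit r kk) j.
      by exists j; rewrite // bit_clear_r // ?neq_ltn ?lt_jr //; lia.
    rewrite (v_up kk up_kk); last by exists j.
    by rewrite (v_up _ up_r ex_r) v_low ?(malcev_yxx hq) // bit_clear_bit eqxx andbF.
  + have nbit_r : ~~ bit kk r by rewrite bit_r.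
    by rewrite (clear_bit_id nbit_r) (malcev_xxy hq) v_low // bit_clear_bit eqxx andbF.
- move=> kk.
  have rel_w_r : corner_rel (w (clear_bit r kk)) (w (clear_bit m.-1 (clear_bit r kk))).
    case up_kk : (bit kk m.-1).
    + apply: rel_sym; apply: w_step; first by rewrite bit_clear_r.
      by apply: clear_bit_not_top; lia.
    + have low_r : ~~ bit (clear_bit r kk) m.-1 by rewrite bit_clear_r // up_kk.
      by rewrite (clear_bit_id low_r).
  apply: rel_trans (congruence_malcev hq corner_rel_congruence (v_rel kk)
                     (v_rel (clear_bit r kk)) (v_rel _)) _.
  rewrite -{2}(malcev_yxx hq (w (clear_bit m.-1 (clear_bit r kk))) (w kk)).
  by apply: (congruence_malcev hq corner_rel_congruence); [apply: rel_refl | | apply: rel_refl].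
Qed.

Lemma exists_cleared r : r <= m.-1 -> exists v, cleared r v.
Proof.
elim: r => [|r IH lt_r]; first by exists w; apply: cleared0.
have [v hv] := IH (ltnW lt_r); exists (fun kk => q (v kk) (v (clear_bit r kk))
                                          (v (clear_bit m.-1 (clear_bit r kk)))).
exact: cleared_step.
Qed.

(* Once every bit below the last one has been cleared, v agrees off the top vertex with
   w shifted down along the last coordinate, while v and w are related at the top. *)
Lemma corner_rel_top : corner_rel (w (clear_bit m.-1 (top_vertex m))) (w (top_vertex m)).
Proof.
have [_ _ rel_trans _] := corner_rel_congruence.
have [v [vD v_low v_up v_rel]] := exists_cleared (leqnn m.-1).
apply: rel_trans (v_rel (top_vertex m)).
apply: (Delta_corner_of_agree (Delta_clear_bit m.-1 wD) vD) => kk not_top.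
case up_kk : (bit kk m.-1); last by rewrite v_low ?up_kk // clear_bit_id ?up_kk.
rewrite v_up //; move: not_top; rewrite negb_forall => /existsP [j nbit_j]; exists j => //.
have : val j != m.-1 by apply: contraNneq nbit_j => ->.
by rewrite neq_ltn => /orP [//|]; have : val j < m := ltn_ord j; lia.
Qed.

End ClearBits.

Lemma corner_rel_centralizes : centralizes X be corner_rel.
Proof.
apply/(centralizesP X be corner_rel m_gt0) => k a b _ rel t ht w_step.
apply: (corner_rel_top _ w_step); apply: Delta_termop => // p.
exact: (@D_gen _ X _ _ (tag p) _ _ _ (rel _ _)).
Qed.

Lemma Delta_corner_of_commutator x y : commutator X be x y -> Delta X be (corner x y).
Proof. by move=> comm_xy; apply: comm_xy corner_rel_congruence corner_rel_centralizes. Qed.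

End CommutatorToDelta.

Section DeltaToCommutator.
Variables (A : Type) (X : algebra A) (m : nat) (be : 'I_m -> A -> A -> Prop).
Hypothesis hc : forall i, congruence X (be i).

(* Every member of Delta has the shape of the tuples in Bulatov's condition: its
   coordinate kk is a term evaluated at the pairs (a i j, b i j), taking b i j exactly
   when bit i of kk is set.  Blocks are indexed by nat, so that the blocks of the
   arguments of a basic operation are easily merged; only j < rep_size matters. *)
Record cube_rep := CubeRep {
  rep_size : nat;
  rep_a : 'I_m -> nat -> A;
  rep_b : 'I_m -> nat -> A;
  rep_term : ('I_m * nat -> A) -> A }.

Definition represents (v : 'I_(2 ^ m) -> A) (r : cube_rep) : Prop :=
  [/\ termop X (rep_term r),
      (forall i j, be i (rep_a r i j) (rep_b r i j)),
      (forall x y : 'I_m * nat -> A, (forall i j, j < rep_size r -> x (i, j) = y (i, j)) ->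
         rep_term r x = rep_term r y)
    & forall kk, v kk = rep_term r (fun p => if bit kk p.1 then rep_b r p.1 p.2
                                                          else rep_a r p.1 p.2)].

Lemma represents_cvec (i : 'I_m) a b v : be i a b -> (forall kk, v kk = cvec i a b kk) ->
  represents v (CubeRep 1 (fun _ _ => a) (fun i' _ => if i' == i then b else a)
                                     (fun x => x (i, 0))).
Proof.
move=> hab hv; split => //=.
- exact: (@T_var _ X _ (i, 0)).
- by move=> i' j; case: eqP => [->|_] //; case: (hc i').
- by move=> x y; apply.
- by move=> kk; rewrite hv /cvec eqxx; case: bit.
Qed.

(* Block j of the combined representation interleaves the blocks of the arguments:
   index j * M + l is index j of the l-th argument. *)
Lemma represents_op (o : op_idx X) (vs : 'I_(arity o) -> 'I_(2 ^ m) -> A)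
    (F : 'I_(arity o) -> cube_rep) (x0 : A) v :
  (forall l, represents (vs l) (F l)) -> (forall kk, v kk = @op _ X o (fun l => vs l kk)) ->
  let M := arity o in
  represents v
    (CubeRep (M * \max_(l < M) rep_size (F l))
       (fun i j => if insub (j %% M) is Some l then rep_a (F l) i (j %/ M) else x0)
       (fun i j => if insub (j %% M) is Some l then rep_b (F l) i (j %/ M) else x0)
       (fun x => @op _ X o (fun l => rep_term (F l) (fun p => x (p.1, p.2 * M + l))))).
Proof.
move=> hF hv M; split => /=.
- apply: (@T_op _ X _ o (fun l x => rep_term (F l) (fun p => x (p.1, p.2 * M + l)))) => // l.
  by have [ht _ _ _] := hF l; apply: termop_comp ht.
- move=> i j; case: insubP => [l _ _|_]; first by have [_ hab _ _] := hF l; apply: hab.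
  by case: (hc i).
- move=> x y agree; congr op; apply: functional_extensionality_dep => l.
  have [_ _ local _] := hF l; apply: local => i j lt_j; apply: agree.
  have le_size : rep_size (F l) <= \max_(l < M) rep_size (F l) by apply: leq_bigmax_cond.
  have : j.+1 * M <= M * \max_(l < M) rep_size (F l).
    by rewrite mulnC leq_mul2l (leq_trans lt_j le_size) orbT.
  by rewrite /=; have := ltn_ord l; rewrite mulSn /M; lia.
- move=> kk; rewrite hv; congr op; apply: functional_extensionality_dep => l.
  have [_ _ _ ->] := hF l; congr rep_term; apply: functional_extensionality_dep => p.
  have M_gt0 : 0 < M by apply: leq_ltn_trans (ltn_ord l).
  by rewrite /= modnMDl modn_small // valK divnMDl // divn_small // addn0.
Qed.

Lemma Delta_represented v : Delta X be v -> exists r, represents v r.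
Proof.
elim=> [i a b v' hab hv | o vs v' _ IH hv].
  by eexists; apply: represents_cvec hab hv.
have [F hF] := functional_choice _ IH.
have x0 : A by apply: v' (Ordinal (expn_gt0 2 m)).
by eexists; apply: represents_op x0 _ hF hv.
Qed.

Lemma Delta_clear_trivial (i0 : 'I_m) : (forall c d, be i0 c d -> c = d) ->
  forall v, Delta X be v -> forall k, v (clear_bit i0 k) = v k.
Proof.
move=> triv v; elim=> [i a b v' hab hv | o vs v' _ IH hv] k; rewrite !hv.
  rewrite /cvec bit_clear_bit ltn_ord /=; case: (eqVneq i i0) => [eq_i|ne_i].
    by rewrite eq_i eqxx andbF; rewrite eq_i in hab; rewrite (triv _ _ hab); case: ifP.
  by rewrite (ne_i : nat_of_ord i != i0) andbT.
by congr op; apply: functional_extensionality_dep => l; apply: IH.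
Qed.

Hypothesis m_gt0 : 0 < m.

(* The term is padded with one extra variable per block, where a nontrivial pair is
   substituted, so that the blocks of the centrality condition differ somewhere. *)
Lemma commutator_of_Delta_corner_nontrivial (c d : 'I_m -> A) x y :
  (forall i, be i (c i) (d i)) -> (forall i, c i <> d i) ->
  Delta X be (corner x y) -> commutator X be x y.
Proof.
move=> hcd ne_cd hD ga ga_cong /(centralizesP X be ga m_gt0) ga_cube.
have [ga_refl _ _ _] := ga_cong.
have [[N a b t] [ht hab local hr]] := Delta_represented hD.
pose k (_ : 'I_m) := N.+1.
pose a' i (j : 'I_(k i)) := if nat_of_ord j < N then a i j else c i.
pose b' i (j : 'I_(k i)) := if nat_of_ord j < N then b i j else d i.
pose h (p : 'I_m * nat) : {i : 'I_m & 'I_(k i)} :=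
  existT (fun i => 'I_(k i)) p.1 (inord (minn p.2 N)).
pose t' (z : {i : 'I_m & 'I_(k i)} -> A) := t (fun p => z (h p)).
have eval_t' kk : cube_eval t' a' b' kk = corner x y kk.
  rewrite hr; apply: local => i j /= lt_j.
  have -> : minn j N = j by apply/minn_idPl/ltnW.
  by rewrite /a' /b' inordK ?lt_j // ltnS ltnW.
have := ga_cube k a' b' _ _ t' (termop_comp h ht).
rewrite !eval_t' corner_top corner_not_top ?clear_bit_not_top ?prednK //; apply.
- by move=> i; exists ord_max; rewrite /a' /b' /= ltnn; apply: ne_cd.
- by move=> i l; rewrite /a' /b'; case: ifP => _; [apply: hab | apply: hcd].
- move=> kk _ not_top.
  by rewrite !eval_t' !corner_not_top ?clear_bit_not_top ?prednK //; apply: ga_refl.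
Qed.

Lemma commutator_of_Delta_corner x y : Delta X be (corner x y) -> commutator X be x y.
Proof.
move=> hD; case: (classic (exists i0 : 'I_m, forall c d, be i0 c d -> c = d)).
  move=> [i0 triv] ga [ga_refl _ _ _] _.
  have := Delta_clear_trivial triv hD (top_vertex m).
  by rewrite corner_top corner_not_top ?clear_bit_not_top // => ->; apply: ga_refl.
move=> nontriv.
have [cd hcd] : exists cd : 'I_m -> A * A, forall i, be i (cd i).1 (cd i).2 /\ (cd i).1 <> (cd i).2.
  apply: (functional_choice (fun i (p : A * A) => be i p.1 p.2 /\ p.1 <> p.2)) => i.
  apply: NNPP => no_pair; apply: nontriv.
  by exists i => c d hcd; apply: NNPP => ne_cd; apply: no_pair; exists (c, d).
by apply: (commutator_of_Delta_corner_nontrivial (c := fun i => (cd i).1)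
                                                (d := fun i => (cd i).2) _ _ hD) => i;
  case: (hcd i).
Qed.

End DeltaToCommutator.

(** * Faces of the cube *)

Section Faces.
Variables (n : nat) (I : {set 'I_n}).

(* The face of the n-cube spanned by the coordinates in I, with #|I| coordinates
   listed in increasing order as in [commutator_sub]. *)
Definition face_proj (k : 'I_(2 ^ n)) : 'I_(2 ^ #|I|) :=
  vertex #|I| (fun j => oapp (fun j' : 'I_#|I| => bit k (enum_val j')) false (insub j)).

Definition face_emb (k : 'I_(2 ^ #|I|)) : 'I_(2 ^ n) :=
  vertex n (fun i =>
    oapp (fun i' : 'I_n => (i' \in I) && bit k (index i' (enum I))) false (insub i)).

Lemma bit_face_proj k (j : 'I_#|I|) : bit (face_proj k) j = bit k (enum_val j).
Proof. by rewrite bit_vertex ltn_ord valK. Qed.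

Lemma bit_face_emb k (i : 'I_n) : bit (face_emb k) i = (i \in I) && bit k (index i (enum I)).
Proof. by rewrite bit_vertex ltn_ord valK. Qed.

Lemma index_enum_lt (i : 'I_n) : i \in I -> index i (enum I) < #|I|.
Proof. by move=> iI; rewrite cardE index_mem mem_enum. Qed.

Lemma enum_val_index (i : 'I_n) (iI : i \in I) : enum_val (Ordinal (index_enum_lt iI)) = i.
Proof. by rewrite /enum_val /= nth_index // mem_enum. Qed.

Lemma index_enum_val (j : 'I_#|I|) : index (enum_val j) (enum I) = j.
Proof. by rewrite /enum_val index_uniq ?enum_uniq // -cardE. Qed.

Lemma is_top_face_projP (k : 'I_(2 ^ n)) :
  reflect (forall i, i \in I -> bit k i) (is_top (face_proj k)).
Proof.
apply: (iffP forallP) => [top_k i iI | bits_k j].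
  by have := top_k (Ordinal (index_enum_lt iI)); rewrite bit_face_proj enum_val_index.
by rewrite bit_face_proj bits_k ?enum_valP.
Qed.

Lemma face_embK : cancel face_emb face_proj.
Proof.
move=> k; apply: eq_vertex => j lt_j; have -> : j = Ordinal lt_j by [].
by rewrite bit_face_proj bit_face_emb enum_valP index_enum_val.
Qed.

Lemma bit_face_emb_top (i : 'I_n) : bit (face_emb (top_vertex #|I|)) i = (i \in I).
Proof.
by rewrite bit_face_emb bit_vertex andbT; case: (boolP (i \in I)) => // /index_enum_lt ->.
Qed.

End Faces.

Arguments face_proj {n} I k.
Arguments face_emb {n} I k.

Definition subfamily (A : Type) n (alpha : 'I_n -> A -> A -> Prop) (I : {set 'I_n}) :
  'I_#|I| -> A -> A -> Prop := fun j => alpha (enum_val j).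
Arguments subfamily {A n} alpha I.

Section FaceDelta.
Variables (A : Type) (X : algebra A) (n : nat) (alpha : 'I_n -> A -> A -> Prop).
Hypothesis hc : forall i, congruence X (alpha i).
Variable I : {set 'I_n}.

Lemma Delta_face_proj v :
  Delta X (subfamily alpha I) v -> Delta X alpha (fun k => v (face_proj I k)).
Proof.
apply: Delta_comp => j a b hab; apply: (@D_gen _ X _ _ (enum_val j) a b _ hab) => k.
by rewrite /cvec bit_face_proj.
Qed.

Hypothesis I_neq0 : I != set0.

Lemma Delta_face_emb v :
  Delta X alpha v -> Delta X (subfamily alpha I) (fun k => v (face_emb I k)).
Proof.
have cardI_gt0 : 0 < #|I| by rewrite card_gt0.
apply: Delta_comp => i a b hab; case iI : (i \in I).
  apply: (@D_gen _ X _ _ (Ordinal (index_enum_lt iI)) a b).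
    by rewrite /subfamily enum_val_index.
  by move=> k; rewrite /cvec bit_face_emb iI.
apply: Delta_ext (Delta_const cardI_gt0 (fun j => hc _) a) _ => k.
by rewrite /cvec bit_face_emb iI.
Qed.

End FaceDelta.

(** * Transfer between the two algebras *)

Lemma commutator_subE (A : Type) (X : algebra A) (q : A -> A -> A -> A) n
    (alpha : 'I_n -> A -> A -> Prop) (I : {set 'I_n}) x y :
  malcev_term X q -> (forall i, congruence X (alpha i)) -> I != set0 ->
  commutator_sub X alpha I x y <-> Delta X (subfamily alpha I) (corner x y).
Proof.
move=> hq hc I_neq0; have cardI_gt0 : 0 < #|I| by rewrite card_gt0.
split; first exact: (Delta_corner_of_commutator hq cardI_gt0).
exact: (commutator_of_Delta_corner (fun j => hc _) cardI_gt0).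
Qed.

Section Transfer.
Variables (A : Type) (X Y : algebra A) (q : A -> A -> A -> A).
Hypotheses (hqX : malcev_term X q) (hqY : malcev_term Y q).
Variables (n : nat) (alpha : 'I_n -> A -> A -> Prop).
Hypotheses (hcX : forall i, congruence X (alpha i)) (hcY : forall i, congruence Y (alpha i)).

Lemma commutator_sub_transfer :
  (forall v, Delta X alpha v -> Delta Y alpha v) ->
  forall I : {set 'I_n}, I != set0 ->
  forall x y, commutator_sub X alpha I x y -> commutator_sub Y alpha I x y.
Proof.
move=> Delta_sub I I_neq0 x y.
move=> /(commutator_subE _ _ hqX hcX I_neq0) /Delta_face_proj /Delta_sub.
move=> /(Delta_face_emb hcY I_neq0) hY; apply/(commutator_subE _ _ hqY hcY I_neq0).
by apply: Delta_ext hY _ => k; rewrite face_embK.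
Qed.

Hypothesis n_gt0 : 0 < n.
Hypothesis comm_sub : forall I : {set 'I_n}, I != set0 ->
  forall x y, commutator_sub X alpha I x y -> commutator_sub Y alpha I x y.

(* With I the set of bits of K, the face of I has K as its top vertex and vertices
   below K elsewhere; correcting u on the tuples of the cube whose I-bits are all set
   fixes the value at K without touching the values below K. *)
Lemma Delta_transfer_step u v (K : 'I_(2 ^ n)) :
  Delta X alpha u -> Delta Y alpha u -> Delta X alpha v -> 0 < K ->
  (forall k : 'I_(2 ^ n), k < K -> u k = v k) ->
  exists2 u', Delta X alpha u' /\ Delta Y alpha u' & forall k : 'I_(2 ^ n), k <= K -> u' k = v k.
Proof.
move=> uX uY vX K_gt0 agree; pose I := [set i : 'I_n | bit K i].
have [i0 bit_i0] := vertex_gt0_bit K_gt0.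
have I_neq0 : I != set0 by apply/set0Pn; exists i0; rewrite inE.
have emb_top : face_emb I (top_vertex #|I|) = K.
  by apply: eq_vertex => i lt_i; rewrite (_ : i = Ordinal lt_i) // bit_face_emb_top inE.
have emb_lt k : ~~ is_top k -> face_emb I k < K.
  move=> not_top; rewrite ltn_neqAle; apply/andP; split.
    apply: contraNneq not_top => /val_inj; rewrite -emb_top => /(can_inj (face_embK (I:=I))) ->.
    exact: is_top_vertex.
  apply: leq_vertex => i lt_i; rewrite (_ : i = Ordinal lt_i) // bit_face_emb inE.
  by case/andP.
have cornerX : Delta X (subfamily alpha I) (corner (u K) (v K)).
  rewrite -emb_top; apply: (Delta_corner_of_agree hqX _ (fun j => hcX (enum_val j))
    (Delta_face_emb hcX I_neq0 uX) (Delta_face_emb hcX I_neq0 vX)).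
    by rewrite card_gt0.
  by move=> k /emb_lt /agree.
have cornerY : Delta Y (subfamily alpha I) (corner (u K) (v K)).
  apply/(commutator_subE _ _ hqY hcY I_neq0); apply: (comm_sub I_neq0).
  exact/(commutator_subE _ _ hqX hcX I_neq0).
exists (fun k => q (u k) (u K) (corner (u K) (v K) (face_proj I k))); first split.
- apply: (Delta_malcev hqX uX); [exact: Delta_const | exact: Delta_face_proj].
- apply: (Delta_malcev hqY uY); [exact: Delta_const | exact: Delta_face_proj].
- move=> k; rewrite leq_eqVlt => /orP [/eqP/val_inj -> | lt_k].
    rewrite /corner (_ : is_top _) ?(malcev_xxy hqX) //.
    by apply/is_top_face_projP => i; rewrite inE.
  rewrite corner_not_top ?(malcev_yxx hqX) ?agree //.
  apply/is_top_face_projP => bits_k; move: lt_k; rewrite ltnNge => /negP; apply.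
  by apply: leq_vertex => i lt_i bit_i; apply: (bits_k (Ordinal lt_i)); rewrite inE.
Qed.

Lemma Delta_transfer v : Delta X alpha v -> Delta Y alpha v.
Proof.
move=> vX; have const_XY x : Delta X alpha (fun _ => x) /\ Delta Y alpha (fun _ => x).
  by split; apply: Delta_const.
suff /(_ _ (leqnn _)) [u [_ uY] agree] : forall K, K <= 2 ^ n ->
    exists2 u, Delta X alpha u /\ Delta Y alpha u & forall k : 'I_(2 ^ n), k < K -> u k = v k.
  by apply: Delta_ext uY _ => k; rewrite agree.
elim=> [_|K IH lt_K]; first by exists (fun _ => v (Ordinal (expn_gt0 2 n))); first exact: const_XY.
have [u [uX uY] agree] := IH (ltnW lt_K).
case: (posnP K) => [K0|K_gt0].
  exists (fun _ => v (Ordinal lt_K)) => [|k lt_k1]; first exact: const_XY.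
  by congr v; apply: val_inj => /=; move: lt_k1; rewrite K0; case: (nat_of_ord k).
have [u' uXY' agree'] := Delta_transfer_step (K := Ordinal lt_K) uX uY vX K_gt0 agree.
by exists u' => // k; rewrite ltnS; apply: agree'.
Qed.

End Transfer.

Unset Implicit Arguments.

Theorem mainTheorem10 (A : Type) (XA XB : algebra A) (q : A -> A -> A -> A)
    (hqA : malcev_term XA q) (hqB : malcev_term XB q)
    (n : nat) (hn : 1 <= n) (alpha : 'I_n -> A -> A -> Prop)
    (hcA : forall i, congruence XA (alpha i)) (hcB : forall i, congruence XB (alpha i)) :
  (forall I : {set 'I_n}, I != set0 ->
     forall x y, commutator_sub XA alpha I x y <-> commutator_sub XB alpha I x y)
  <->
  (forall v : 'I_(2 ^ n) -> A, Delta XA alpha v <-> Delta XB alpha v).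
Proof.
split=> [comm_eq v | Delta_eq I I_neq0 x y]; split.
- apply: (Delta_transfer hqA hqB hcA hcB hn) => I I_neq0 x y.
  exact: (comm_eq I I_neq0 x y).1.
- apply: (Delta_transfer hqB hqA hcB hcA hn) => I I_neq0 x y.
  exact: (comm_eq I I_neq0 x y).2.
- by apply: (commutator_sub_transfer hqA hqB hcA hcB) => // w /Delta_eq.
- by apply: (commutator_sub_transfer hqB hqA hcB hcA) => // w /Delta_eq.
Qed.
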